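(* Let $A,B$ be $n\times n$ complex matrices. Then \[ \|A+B\|_F\le \sqrt{\frac{1+\sqrt{2}}{2}}\,\big\||A|+|B|\big\|_F . \]
   Context: For an $n\times n$ complex matrix $A$, $|A|:=(A^*A)^{1/2}$ denotes the operator absolute value (positive semidefinite square root), where $A^*$ is the conjugate transpose. $\|A\|_F=(\operatorname{tr}|A|^2)^{1/2}=(\operatorname{tr}A^*A)^{1/2}$ is the Frobenius norm. *)

From mathcomp Require Import all_boot all_algebra.
From mathcomp Require Import complex reals.
Set Implicit Arguments.
Unset Strict Implicit.
Unset Printing Implicit Defensive.
Import GRing.Theory Num.Theory.
Local Open Scope ring_scope.

Section Defs.
Variable C : numClosedFieldType.

Definition adjmx n (A : 'M[C]_n) : 'M[C]_n := map_mx Num.conj A^T.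

(* operator absolute value |A| := (A^* A)^{1/2}, the positive semidefinite
   square root, defined by functional calculus on the (normal, indeed PSD)
   matrix A^* A = U^{-1} diag(d) U  (U unitary, d = eigenvalues >= 0):
   |A| = U^{-1} diag(sqrt d) U. *)
Definition absmx n (A : 'M[C]_n) : 'M[C]_n :=
  let H := adjmx A *m A in
  let U := spectralmx H in
  invmx U *m diag_mx (map_mx (fun x : C => sqrtC x) (spectral_diag H)) *m U.

Definition frobnorm n (A : 'M[C]_n) : C := sqrtC (\tr (adjmx A *m A)).
End Defs.

From mathcomp Require Import all_boot all_algebra.
From mathcomp Require Import complex reals.
From mathcomp Require Import order ring.
Import Order.POrderTheory GRing.Theory Num.Theory.
Set Implicit Arguments.
Unset Strict Implicit.
Unset Printing Implicit Defensive.
Local Open Scope ring_scope.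

(** Write the polar decompositions A = W|A| and B = Z|B|, where W W^* and
    Z Z^* are orthogonal projections, and put K = W^* Z, so that
    tr(A^* B) = tr(|A| K |B|).  Splitting |A| = R^2 and |B| = L^2 and applying
    the weighted AM-GM inequality 2 Re<X, Y> <= mu ||X||^2 + ||Y||^2 / mu to
    X = L K^* R and Y = L R gives
      2 Re tr(A^* B) <= mu tr(|A| K |B| K^* ) + tr(|A| |B|) / mu.
    A second AM-GM, for K^* |A| and |B| K^*, bounds 2 tr(|A| K |B| K^* ) by
    tr(A^* Z Z^* A) + tr(B^* W W^* B) <= ||A||^2 + ||B||^2.  Hence
      ||A + B||^2 <= (1 + mu/2)(||A||^2 + ||B||^2) + tr(|A| |B|) / mu,
    and for mu = sqrt 2 - 1 the right-hand side is (1 + sqrt 2) / 2 times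
    ||(|A| + |B|)||^2 = ||A||^2 + ||B||^2 + 2 tr(|A| |B|). *)

Lemma mulmxA_subst {R : pzRingType} {m p q r} (W : 'M[R]_(m, p))
    {X : 'M_(p, q)} {Y : 'M_(q, r)} {Z} :
  X *m Y = Z -> W *m X *m Y = W *m Z.
Proof. by move=> <-; rewrite mulmxA. Qed.

Section Adjoint.
Context {C : numClosedFieldType} {n : nat}.
Implicit Types X Y G : 'M[C]_n.

Lemma adjmxE X : adjmx X = (X ^t* )%sesqui. Proof. by []. Qed.

Lemma adjmxM X Y : adjmx (X *m Y) = adjmx Y *m adjmx X.
Proof. by rewrite /adjmx trmx_mul map_mxM. Qed.

Lemma adjmxK X : adjmx (adjmx X) = X.
Proof. exact: trmxCK. Qed.

Lemma adjmxD X Y : adjmx (X + Y) = adjmx X + adjmx Y.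
Proof. by rewrite /adjmx linearD /= map_mxD. Qed.

Lemma adjmxB X Y : adjmx (X - Y) = adjmx X - adjmx Y.
Proof. by rewrite /adjmx linearB /= map_mxB. Qed.

Lemma adjmxZ (a : C) X : adjmx (a *: X) = a^* *: adjmx X.
Proof. by apply/matrixP=> i j; rewrite !mxE rmorphM. Qed.

Lemma adjmx1 : adjmx (1%:M : 'M[C]_n) = 1%:M.
Proof. by rewrite /adjmx trmx1 map_mx1. Qed.

Lemma adjmx_mul_normalmx X : adjmx X *m X \is normalmx.
Proof. by apply/normalmxP; rewrite -!adjmxE adjmxM adjmxK. Qed.

Definition frobdot X Y := \tr (adjmx X *m Y).

Lemma frobnormE X : frobnorm X = sqrtC (frobdot X X). Proof. by []. Qed.

Lemma frobdotDl X Y Z : frobdot (X + Y) Z = frobdot X Z + frobdot Y Z.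
Proof. by rewrite /frobdot adjmxD mulmxDl linearD. Qed.

Lemma frobdotDr X Y Z : frobdot X (Y + Z) = frobdot X Y + frobdot X Z.
Proof. by rewrite /frobdot mulmxDr linearD. Qed.

Lemma adjmx_mul_diag_ge0 {m} (X : 'M[C]_(m, n)) i :
  0 <= ((X ^t* )%sesqui *m X) i i.
Proof.
by rewrite mxE; apply: sumr_ge0 => k _; rewrite !mxE -normCKC exprn_ge0.
Qed.

Lemma frobdot_ge0 X : 0 <= frobdot X X.
Proof. by apply: sumr_ge0 => i _; apply: adjmx_mul_diag_ge0. Qed.

Lemma frobdot_eq0 X : frobdot X X = 0 -> X = 0.
Proof.
move=> /psumr_eq0P X0; apply/matrixP => k i.
move: (X0 (fun j _ => adjmx_mul_diag_ge0 X j) i isT).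
rewrite mxE => /psumr_eq0P X0i.
have /X0i/(_ k isT) : forall j, true -> 0 <= (X ^t* )%sesqui i j * X j i.
  by move=> j _; rewrite !mxE -normCKC exprn_ge0.
by rewrite !mxE -normCKC => /eqP; rewrite expf_eq0 normr_eq0 => /eqP ->.
Qed.

Lemma frobdot_cross_le X Y (l : C) : 0 < l ->
  frobdot X Y + frobdot Y X <= l * frobdot X X + l^-1 * frobdot Y Y.
Proof.
move=> l_gt0; have := frobdot_ge0 (l *: X - Y).
rewrite /frobdot adjmxB adjmxZ (geC0_conj (ltW l_gt0)) mulmxBl !mulmxBr.
rewrite -!scalemxAl -!scalemxAr !linearB !linearZ /= => diff_ge0.
rewrite -subr_ge0.
set a := \tr (_ X *m X); set b := \tr (_ X *m Y).
set c := \tr (_ Y *m X); set e := \tr (_ Y *m Y).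
have -> : l * a + l^-1 * e - (b + c) =
    l^-1 * (l * (l * a) - l * b - (l * c - e)).
  by field; rewrite gt_eqF.
by apply: mulr_ge0; rewrite // invr_ge0 ltW.
Qed.

Lemma tr_adjmx_proj_le X G : adjmx G = G -> G *m G = G ->
  \tr (adjmx X *m G *m X) <= frobdot X X.
Proof.
move=> G_herm G_idem; rewrite -subr_ge0.
have := frobdot_ge0 ((1%:M - G) *m X).
rewrite /frobdot adjmxM adjmxB adjmx1 G_herm.
rewrite !(mulmxBl, mulmxBr, mul1mx, mulmx1) !mulmxA (mulmxA_subst _ G_idem).
by rewrite !linearB /= subrr subr0.
Qed.
End Adjoint.

Section SpectralFunction.
Context {C : numClosedFieldType} {n : nat}.
Variable H : 'M[C]_n.
Local Notation U := (spectralmx H).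
Local Notation d := (spectral_diag H).

Definition spectral_fun (f : C -> C) := invmx U *m diag_mx (map_mx f d) *m U.

Lemma spectral_funM f g :
  spectral_fun f *m spectral_fun g = spectral_fun (fun x => f x * g x).
Proof.
rewrite /spectral_fun !mulmxA -[_ *m U *m invmx U]mulmxA.
rewrite mulmxV ?spectral_unit // mulmx1.
rewrite -[_ *m diag_mx _ *m diag_mx _]mulmxA mulmx_diag.
by congr (_ *m diag_mx _ *m _); apply/rowP=> j; rewrite !mxE.
Qed.

Lemma eq_spectral_fun f g :
  (forall i, f (d 0 i) = g (d 0 i)) -> spectral_fun f = spectral_fun g.
Proof.
move=> fg; rewrite /spectral_fun; congr (_ *m diag_mx _ *m _).
by apply/rowP=> j; rewrite !mxE fg.
Qed.

Lemma adjmx_spectral_fun f :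
  (forall i, (f (d 0 i))^* = f (d 0 i)) ->
  adjmx (spectral_fun f) = spectral_fun f.
Proof.
move=> f_real; rewrite /spectral_fun invmx_unitary ?spectral_unitarymx //.
rewrite -adjmxE !adjmxM adjmxK mulmxA.
congr (_ *m _ *m _); apply/matrixP=> i j; rewrite !mxE.
by case: (eqVneq i j) => [->|_]; rewrite ?mulr1n ?mulr0n ?f_real ?conjC0.
Qed.

Lemma spectral_fun_id : H \is normalmx -> spectral_fun id = H.
Proof.
move=> /orthomx_spectralP H_spectral; rewrite [RHS]H_spectral /spectral_fun.
congr (_ *m diag_mx _ *m _).
by apply/rowP=> j; rewrite !mxE.
Qed.
End SpectralFunction.

Lemma spectral_diag_adjmx_mul_ge0 {C : numClosedFieldType} {n} (A : 'M[C]_n) i :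
  0 <= spectral_diag (adjmx A *m A) 0 i.
Proof.
set U := spectralmx (adjmx A *m A).
have UUV : U *m invmx U = 1%:M by rewrite mulmxV // spectral_unit.
have UV : invmx U = adjmx U by rewrite invmx_unitary // spectral_unitarymx.
have diagE :
    U *m (adjmx A *m A) *m adjmx U = diag_mx (spectral_diag (adjmx A *m A)).
  rewrite {1}(orthomx_spectralP (adjmx_mul_normalmx A)) -/U -UV !mulmxA UUV.
  by rewrite mul1mx -mulmxA UUV mulmx1.
have := adjmx_mul_diag_ge0 (A *m adjmx U) i.
by rewrite -adjmxE adjmxM adjmxK !mulmxA -(mulmxA U) diagE mxE eqxx mulr1n.
Qed.

Section PolarDecomposition.
Context {C : numClosedFieldType} {n : nat}.

(* [R] is a hermitian square root of [P]; it lets the AM-GM step split [P]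
   symmetrically. *)
Record polar_decomp (A W P R : 'M[C]_n) : Prop := PolarDecomp {
  polar_herm : adjmx P = P;
  polar_sqrt_herm : adjmx R = R;
  polar_sqrtE : R *m R = P;
  polar_sqE : P *m P = adjmx A *m A;
  polar_factorE : W *m P = A;
  polar_proj : W *m adjmx W *m (W *m adjmx W) = W *m adjmx W }.

Section PseudoInverse.
Variables A P P' : 'M[C]_n.
Hypotheses (P_herm : adjmx P = P) (P'_herm : adjmx P' = P').
Hypotheses (P_sq : P *m P = adjmx A *m A) (PP'C : P *m P' = P' *m P).
Hypotheses (P_pinv : P *m P' *m P = P) (P'_pinv : P' *m P *m P' = P').

Lemma pinv_polar_factorE : A *m P' *m P = A.
Proof.
apply/eqP; rewrite -subr_eq0; apply/eqP/frobdot_eq0.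
have P_pinvl X : X *m P *m P' *m P = X *m P by rewrite -2!(mulmxA X) P_pinv.
rewrite /frobdot adjmxB !adjmxM P_herm P'_herm !(mulmxBl, mulmxBr) !mulmxA.
rewrite !(mulmxA_subst _ (esym P_sq)) -P_sq !mulmxA !P_pinvl P_pinv.
by rewrite !subrr linear0.
Qed.

Lemma pinv_polar_proj :
  A *m P' *m adjmx (A *m P') *m (A *m P' *m adjmx (A *m P'))
  = A *m P' *m adjmx (A *m P').
Proof.
have isoE : adjmx (A *m P') *m (A *m P') = P *m P'.
  rewrite adjmxM P'_herm !mulmxA (mulmxA_subst _ (esym P_sq)).
  by rewrite mulmxA -PP'C P_pinv.
rewrite mulmxA -(mulmxA _ (adjmx _)) isoE adjmxM P'_herm !mulmxA.
by rewrite -2!(mulmxA A) P'_pinv.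
Qed.
End PseudoInverse.

Lemma polar_decomp_absmx (A : 'M[C]_n) :
  exists W R, polar_decomp A W (absmx A) R.
Proof.
pose H := adjmx A *m A.
(* Moore-Penrose inverse of |A|, using (sqrtC 0)^-1 = 0. *)
pose P' := spectral_fun H (fun x => (sqrtC x)^-1).
have herm f : (forall x, 0 <= x -> 0 <= f x) ->
    adjmx (spectral_fun H f) = spectral_fun H f.
  move=> f_ge0; apply: adjmx_spectral_fun => i.
  by rewrite geC0_conj ?f_ge0 ?spectral_diag_adjmx_mul_ge0.
have P_herm : adjmx (absmx A) = absmx A by apply: herm => x; rewrite sqrtC_ge0.
have P'_herm : adjmx P' = P' by apply: herm => x; rewrite invr_ge0 sqrtC_ge0.
have P_sq : absmx A *m absmx A = H.
  rewrite spectral_funM -[RHS](spectral_fun_id (adjmx_mul_normalmx A)).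
  by apply: eq_spectral_fun => i; rewrite -expr2 sqrtCK.
have P_pinv : absmx A *m P' *m absmx A = absmx A.
  rewrite !spectral_funM; apply: eq_spectral_fun => i.
  case: (eqVneq (sqrtC (spectral_diag H 0 i)) 0) => [->|s_neq0].
    by rewrite !mulr0.
  by rewrite mulfV ?mul1r.
have P'_pinv : P' *m absmx A *m P' = P'.
  rewrite !spectral_funM; apply: eq_spectral_fun => i.
  case: (eqVneq (sqrtC (spectral_diag H 0 i)) 0) => [->|s_neq0].
    by rewrite invr0 !mulr0.
  by rewrite mulVf ?mul1r.
have PP'C : absmx A *m P' = P' *m absmx A.
  by rewrite !spectral_funM; apply: eq_spectral_fun => i; rewrite mulrC.
exists (A *m P'), (spectral_fun H (fun x => sqrtC (sqrtC x))); split => //.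
- by apply: herm => x; rewrite !sqrtC_ge0.
- by rewrite spectral_funM; apply: eq_spectral_fun => i; rewrite -expr2 sqrtCK.
- exact: pinv_polar_factorE.
- exact: (pinv_polar_proj P'_herm P_sq PP'C P_pinv P'_pinv).
Qed.
End PolarDecomposition.

Section TwistedTrace.
Context {C : numClosedFieldType} {n : nat}.
Variables A W P R B Z Q L : 'M[C]_n.
Hypotheses (polA : polar_decomp A W P R) (polB : polar_decomp B Z Q L).
Local Notation K := (adjmx W *m Z).

Let P_herm := polar_herm polA.
Let Q_herm := polar_herm polB.
Let R_herm := polar_sqrt_herm polA.
Let L_herm := polar_sqrt_herm polB.

Lemma adjmx_polar_factor : P *m adjmx W = adjmx A.
Proof. by rewrite -(polar_factorE polA) adjmxM P_herm. Qed.

Lemma frobdot_cross_le_twisted mu : 0 < mu ->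
  frobdot A B + frobdot B A <=
  mu * \tr (P *m K *m Q *m adjmx K) + mu^-1 * \tr (P *m Q).
Proof.
move=> mu_gt0; have := frobdot_cross_le (L *m adjmx K *m R) (L *m R) mu_gt0.
rewrite /frobdot !adjmxM !adjmxK ?P_herm ?Q_herm R_herm L_herm !mulmxA.
rewrite !(mulmxA_subst _ (polar_sqrtE polB)).
rewrite ![\tr (_ *m R)]mxtrace_mulC !mulmxA.
rewrite (polar_sqrtE polA) -(polar_factorE polA) -(polar_factorE polB).
rewrite !adjmxM P_herm Q_herm !mulmxA.
by rewrite [\tr (_ *m P)]mxtrace_mulC !mulmxA.
Qed.

Lemma tr_twisted_le :
  2 * \tr (P *m K *m Q *m adjmx K) <= frobdot A A + frobdot B B.
Proof.
have := frobdot_cross_le (adjmx K *m P) (Q *m adjmx K) ltr01.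
rewrite invr1 !mul1r /frobdot !adjmxM !adjmxK P_herm Q_herm !mulmxA.
have adjmx_factorB : Q *m adjmx Z = adjmx B.
  by rewrite -(polar_factorE polB) adjmxM Q_herm.
have projA : \tr (P *m adjmx W *m Z *m adjmx Z *m W *m P) <= frobdot A A.
  rewrite adjmx_polar_factor (mulmxA_subst _ (polar_factorE polA)).
  rewrite -(mulmxA (adjmx A)); apply: tr_adjmx_proj_le (polar_proj polB).
  by rewrite adjmxM adjmxK.
have projB : \tr (K *m Q *m Q *m adjmx Z *m W) <= frobdot B B.
  rewrite (mulmxA_subst _ (polar_factorE polB)) (mulmxA_subst _ adjmx_factorB).
  rewrite [\tr (_ *m W)]mxtrace_mulC !mulmxA.
  rewrite [\tr (_ *m adjmx B)]mxtrace_mulC !mulmxA.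
  rewrite -(mulmxA (adjmx B)); apply: tr_adjmx_proj_le (polar_proj polA).
  by rewrite adjmxM adjmxK.
rewrite [\tr (_ *m P)]mxtrace_mulC !mulmxA mulr_natl mulr2n => cross_le.
exact: le_trans cross_le (lerD projA projB).
Qed.

Lemma frobdot_cross_le_polar mu : 0 < mu ->
  frobdot A B + frobdot B A <=
  mu * ((frobdot A A + frobdot B B) / 2) + mu^-1 * \tr (P *m Q).
Proof.
move=> mu_gt0; apply: le_trans (frobdot_cross_le_twisted mu_gt0) _.
rewrite lerD2r ler_pM2l // ler_pdivlMr ?ltr0n // mulrC.
exact: tr_twisted_le.
Qed.

Lemma frobdot_polar_add :
  frobdot (P + Q) (P + Q) = frobdot A A + frobdot B B + \tr (P *m Q) *+ 2.
Proof.
rewrite frobdotDl !frobdotDr /frobdot P_herm Q_herm.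
rewrite (polar_sqE polA) (polar_sqE polB) [\tr (Q *m P)]mxtrace_mulC.
by rewrite mulr2n; ring.
Qed.
End TwistedTrace.

Lemma frobnorm_le_scale {C : numClosedFieldType} {n} (c : C) (X Y : 'M[C]_n) :
  0 <= c -> frobdot X X <= c * frobdot Y Y ->
  frobnorm X <= sqrtC c * frobnorm Y.
Proof.
move=> c_ge0 XY; rewrite !frobnormE -sqrtCM ?nnegrE ?frobdot_ge0 //.
by rewrite ler_sqrtC ?nnegrE ?mulr_ge0 ?frobdot_ge0.
Qed.

Lemma sqrtC2_gt1 {C : numClosedFieldType} : 1 < sqrtC 2 :> C.
Proof.
by rewrite -[X in X < _]sqrtC1 ltr_sqrtC ?nnegrE ?ler01 ?ler0n ?ltr1n.
Qed.

Lemma invr_sqrtC2_sub1 {C : numClosedFieldType} :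
  (sqrtC 2 - 1)^-1 = sqrtC 2 + 1 :> C.
Proof.
have mu_neq0 : sqrtC 2 - 1 != 0 :> C by rewrite subr_eq0 gt_eqF ?sqrtC2_gt1.
apply: (mulfI mu_neq0); rewrite mulfV //.
by rewrite -subr_sqr sqrtCK expr1n; ring.
Qed.

Theorem mainTheorem1 (R : realType) (n : nat) (A B : 'M[R[i]]_n) :
  frobnorm (A + B) <=
  sqrtC ((1 + sqrtC 2) / 2) * frobnorm (absmx A + absmx B).
Proof.
have [W [RA polA]] := polar_decomp_absmx A.
have [Z [RB polB]] := polar_decomp_absmx B.
have mu_gt0 : 0 < sqrtC 2 - 1 :> R[i] by rewrite subr_gt0 sqrtC2_gt1.
apply: frobnorm_le_scale.
  by rewrite divr_ge0 ?ler0n ?addr_ge0 ?ler01 ?sqrtC_ge0 ?ler0n.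
rewrite (frobdot_polar_add polA polB) frobdotDl !frobdotDr.
rewrite (addrC (frobdot B A)) addrACA.
have := frobdot_cross_le_polar polA polB mu_gt0; rewrite invr_sqrtC2_sub1.
set a := frobdot A A; set b := frobdot B B; set p := \tr _.
have -> : (1 + sqrtC 2) / 2 * (a + b + p *+ 2) =
    a + b + ((sqrtC 2 - 1) * ((a + b) / 2) + (sqrtC 2 + 1) * p).
  by rewrite mulr2n; field.
by rewrite lerD2l.
Qed.
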